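(* Let $k\ge1$ and $c\in\mathcal{S}_k^\beta$. Then $w_{Hom}(c)=q^{sk-1}$ if $\nu(c)=s-1$; $w_{Hom}(c)=q^{sk-k-1}(q^k-1)$ if $\nu(c)<s-1$; and $w_{Hom}(c)=0$ otherwise.
   Context: Let $R$ be a finite commutative chain ring with maximal ideal $\langle\gamma\rangle$, nilpotency index $s$ and residue field $R/\langle\gamma\rangle\cong\mathbb{F}_q$. Fix coset representatives $T=\{e_0,\dots,e_{q-1}\}$ with $e_0=0,e_1=1$, ordered $e_0<\dots<e_{q-1}$; each $r\in R$ is uniquely $\sum_{i=0}^{s-1}r_i\gamma^i$, $r_i\in T$; order $R$ by $x>y$ iff $x_i>y_i$ in $T$ for the largest $i$ with $x_i\neq y_i$; list $R=\{\rho_0,\dots,\rho_{q^s-1}\}$ increasingly. $\mathbf{a}^{(m)}$ is the constant vector of length $m$. Define $G_1^\alpha=(\rho_0\ \cdots\ \rho_{q^s-1})$ and, for $k>1$, $G_k^\alpha$ as the matrix of $q^s$ column blocks, the $j$-th having first row $\boldsymbol{\rho_j}^{(q^{s(k-1)})}$ and $G_{k-1}^\alpha$ below. List $\langle\gamma\rangle$ increasingly as $a_0\gamma<\dots<a_{q^{s-1}-1}\gamma$. Define $G_1^\beta=(1)$ and, for $k>1$, $G_k^\beta$ as the matrix with column blocks: first a block with first row $\mathbf{1}^{(q^{s(k-1)})}$ and $G_{k-1}^\alpha$ below; then for each $j=0,\dots,q^{s-1}-1$ a block with first row the constant vector with entry $a_j\gamma$ and $G_{k-1}^\beta$ below. $\mathcal{S}_k^\beta$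 is the $R$-submodule generated by the rows of $G_k^\beta$. Homogeneous weight: for $x\in R$, $w_{Hom}(x)=0$ if $x=0$; $(q-1)q^{s-2}$ if $x\neq0$, $x\notin\langle\gamma^{s-1}\rangle$; $q^{s-1}$ if $x\neq0$, $x\in\langle\gamma^{s-1}\rangle$; extended to vectors by summing over coordinates. Valuation: for $x\in R\setminus\{0\}$, $\nu(x)$ is the largest $m$ with $x=\gamma^m\beta$, $\beta$ a unit; $\nu(0)=\infty$; for $x\in R^n$, $\nu(x)=\min_i\nu(x_i)$. *)

From HB Require Import structures.
From mathcomp Require Import all_boot all_order all_algebra.
Set Implicit Arguments. Unset Strict Implicit. Unset Printing Implicit Defensive.
Import GRing.Theory.
Local Open Scope ring_scope.

Section ChainRing.
Variables (R : finComUnitRingType) (gamma : R) (s : nat) (T : seq R).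

(* q = size of the residue field = number of coset representatives *)
Definition qT : nat := size T.

Definition in_gpow (m : nat) (x : R) : Prop := exists y : R, x = y * gamma ^+ m.

(* Increasing enumeration rho_0 < ... < rho_{q^s-1} of R: the element whose
   gamma-adic digits (in T, indexed by position in T) are the base-q digits
   of j, with digit i = coefficient of gamma^i. *)
Definition rho (j : nat) : R :=
  \sum_(i < s) T`_((j %/ qT ^ i) %% qT)%N * gamma ^+ i.

(* increasing listing of <gamma>: a_j gamma = rho (q * j) *)
Definition agamma (j : nat) : R := rho (qT * j)%N.

Fixpoint nbeta (k : nat) : nat :=
  match k with
  | 0 => 0%N
  | k'.+1 => if k' == 0%N then 1%N else (qT ^ (s * k') + qT ^ (s - 1) * nbeta k')%N
  end.

(* entry (row r, column j), 0-indexed, of G_k^alpha *)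
Fixpoint Galpha (k r j : nat) : R :=
  match k with
  | 0 => 0
  | k'.+1 =>
    if k' == 0%N then rho j
    else match r with
         | 0 => rho (j %/ qT ^ (s * k'))
         | r'.+1 => Galpha k' r' (j %% qT ^ (s * k'))
         end
  end.

Fixpoint Gbeta (k r j : nat) : R :=
  match k with
  | 0 => 0
  | k'.+1 =>
    if k' == 0%N then 1
    else if (j < qT ^ (s * k'))%N then
           match r with
           | 0 => 1
           | r'.+1 => Galpha k' r' j
           end
         else
           let j' := (j - qT ^ (s * k'))%N in
           match r with
           | 0 => agamma (j' %/ nbeta k')
           | r'.+1 => Gbeta k' r' (j' %% nbeta k')
           end
  end.

Definition Gbeta_mx (k : nat) : 'M[R]_(k, nbeta k) :=
  \matrix_(r < k, j < nbeta k) Gbeta k r j.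

Definition wHom (x : R) : nat :=
  if x == 0 then 0%N
  else if [exists y : R, x == y * gamma ^+ (s - 1)] then (qT ^ (s - 1))%N
  else ((qT - 1) * qT ^ (s - 2))%N.

Definition wHom_vec (n : nat) (c : 'rV[R]_n) : nat := (\sum_(j < n) wHom (c ord0 j))%N.

Definition is_nu (x : R) (m : nat) : Prop :=
  (exists2 b : R, b \is a GRing.unit & x = gamma ^+ m * b) /\
  (forall (m' : nat) (b : R), b \is a GRing.unit -> x = gamma ^+ m' * b -> (m' <= m)%N).

(* nu(c) = m for a vector: minimum of the valuations of the coordinates
   (zero coordinates have valuation infinity) *)
Definition vnu (n : nat) (c : 'rV[R]_n) (m : nat) : Prop :=
  (exists i : 'I_n, is_nu (c ord0 i) m) /\
  (forall (i : 'I_n) (m' : nat), is_nu (c ord0 i) m' -> (m <= m')%N).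

End ChainRing.

From HB Require Import structures.
From mathcomp Require Import all_boot all_order all_algebra.
From mathcomp Require Import zify.
Set Implicit Arguments. Unset Strict Implicit. Unset Printing Implicit Defensive.
Import GRing.Theory.
Local Open Scope ring_scope.

(* The columns of G_k^beta are the vectors of R^k whose first unit coordinate
   is 1: one representative of each unimodular vector up to a unit factor.
   As the homogeneous weight w is unit invariant, the weight of lam G_k^beta
   is 1/|R^*| times the sum of w(lam . x) over the unimodular x.  Over all of
   R^k this sum is (q - 1) q^(s-1) q^(sk-1) for lam <> 0, because w sums to
   (q - 1) q^(2(s-1)) along every nonzero line b + l R.  The remaining x form
   gamma R^k, each point hit q^k times, so they contribute as gamma lam does:
   nothing when gamma lam = 0, i.e. when nu(c) = s - 1. *)

Lemma card_addr (V : finZmodType) (P : pred V) (t : V) :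
  #|[pred x | P (x + t)]| = #|P|.
Proof. by rewrite -!sum1_card [RHS](reindex_inj (addIr t)). Qed.

Lemma sum_ord_mul (m n : nat) (F : nat -> nat) :
  (\sum_(j < m * n) F j = \sum_(a < m) \sum_(b < n) F (a * n + b))%N.
Proof.
elim: m => [|m IH]; first by rewrite mul0n !big_ord0.
by rewrite mulSnr big_split_ord /= IH big_ord_recr.
Qed.

Lemma big_ord_recl_nat (V : nmodType) k (F : nat -> V) :
  \sum_(r < k.+1) F r = F 0%N + \sum_(r < k) F r.+1.
Proof. by rewrite big_ord_recl. Qed.

Lemma exists_ordS (V : nmodType) k (l : nat -> V) :
  [exists i : 'I_k.+1, l i != 0] = (l 0%N != 0) || [exists i : 'I_k, l i.+1 != 0].
Proof.
apply/existsP/orP => [[[[|i] lt_ik] /= li_neq0]|[l0_neq0|/existsP [i li_neq0]]].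
- by left.
- by right; apply/existsP; exists (Ordinal (lt_ik : i < k)%N).
- by exists ord0.
- by exists (lift ord0 i).
Qed.

Lemma scale_row_eq0 (V : pzRingType) n (c : 'rV[V]_n) (a : V) :
  (a *: c == 0) = [forall j, a * c 0 j == 0].
Proof.
apply/eqP/forallP => [/rowP ac0 j|ac0]; last by apply/rowP => j; rewrite !mxE; apply/eqP.
by have := ac0 j; rewrite !mxE => ->.
Qed.

Section LinearCombinationSums.
Variable R : finComUnitRingType.

(* For [l : nat -> R] and [g : R -> nat], [sum_lincomb k l g] is the sum of
   [g (\sum_(i < k) l i * x i)] over all [x] in [R^k]; the three variants
   restrict [x] to the vectors whose first unit coordinate is [1], to the
   vectors with some unit coordinate, and to the vectors with no unit
   coordinate. *)
Fixpoint sum_lincomb (k : nat) (l : nat -> R) (g : R -> nat) : nat :=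
  if k is k'.+1 then
    (\sum_(r : R) sum_lincomb k' (l \o S) (fun z => g (l 0%N * r + z)%R))%N
  else g 0.

Fixpoint sum_lincomb_normed (k : nat) (l : nat -> R) (g : R -> nat) : nat :=
  if k is k'.+1 then
    (sum_lincomb k' (l \o S) (fun z => g (l 0%N + z)%R) +
     \sum_(a : R | a \isn't a GRing.unit)
        sum_lincomb_normed k' (l \o S) (fun z => g (l 0%N * a + z)%R))%N
  else 0%N.

Fixpoint sum_lincomb_unimod (k : nat) (l : nat -> R) (g : R -> nat) : nat :=
  if k is k'.+1 then
    (\sum_(a : R | a \is a GRing.unit)
        sum_lincomb k' (l \o S) (fun z => g (l 0%N * a + z)%R) +
     \sum_(a : R | a \isn't a GRing.unit)
        sum_lincomb_unimod k' (l \o S) (fun z => g (l 0%N * a + z)%R))%N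
  else 0%N.

Fixpoint sum_lincomb_nonunit (k : nat) (l : nat -> R) (g : R -> nat) : nat :=
  if k is k'.+1 then
    (\sum_(a : R | a \isn't a GRing.unit)
        sum_lincomb_nonunit k' (l \o S) (fun z => g (l 0%N * a + z)%R))%N
  else g 0.

Lemma eq_sum_lincomb k l (g g' : R -> nat) :
  g =1 g' -> sum_lincomb k l g = sum_lincomb k l g'.
Proof.
elim: k l g g' => [|k IH] l g g' eq_g /=; first exact: eq_g.
by apply: eq_bigr => r _; apply: IH => z.
Qed.

Lemma sum_lincomb_sum (I : finType) (P : pred I) (F : I -> R -> nat) k l :
  sum_lincomb k l (fun z => \sum_(i | P i) F i z)%N =
  (\sum_(i | P i) sum_lincomb k l (F i))%N.
Proof.
elim: k l F => [//|k IH] l F /=.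
by rewrite exchange_big; apply: eq_bigr => r _; rewrite IH.
Qed.

Lemma sum_lincomb_unimod_sum (I : finType) (P : pred I) (F : I -> R -> nat) k l :
  sum_lincomb_unimod k l (fun z => \sum_(i | P i) F i z)%N =
  (\sum_(i | P i) sum_lincomb_unimod k l (F i))%N.
Proof.
elim: k l F => [l F|k IH l F] /=; first by rewrite big1.
rewrite big_split /=; congr (_ + _)%N; rewrite exchange_big; apply: eq_bigr => r _.
  by rewrite sum_lincomb_sum.
by rewrite IH.
Qed.

Lemma sum_lincomb_normed_sum (I : finType) (P : pred I) (F : I -> R -> nat) k l :
  sum_lincomb_normed k l (fun z => \sum_(i | P i) F i z)%N =
  (\sum_(i | P i) sum_lincomb_normed k l (F i))%N.
Proof.
elim: k l F => [l F|k IH l F] /=; first by rewrite big1.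
rewrite big_split /= sum_lincomb_sum; congr (_ + _)%N.
by rewrite exchange_big; apply: eq_bigr => r _; rewrite IH.
Qed.

Lemma sum_lincomb_scale k l (g : R -> nat) (c : R) :
  sum_lincomb k l (fun z => g (c * z)) = sum_lincomb k (fun i => c * l i) g.
Proof.
elim: k l g => [l g|k IH l g] /=; first by rewrite mulr0.
apply: eq_bigr => r _; rewrite -IH; apply: eq_sum_lincomb => z.
by rewrite mulrDr mulrA.
Qed.

Lemma sum_lincomb_scale_unit k l (g : R -> nat) (u : R) : u \is a GRing.unit ->
  sum_lincomb k l (fun z => g (u * z)) = sum_lincomb k l g.
Proof.
move=> u_unit; elim: k l g => [l g|k IH l g] /=; first by rewrite mulr0.
rewrite [RHS](reindex_inj (mulrI u_unit)) /=; apply: eq_bigr => r _.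
rewrite -(IH _ (fun z => g (l 0%N * (u * r) + z)%R)); apply: eq_sum_lincomb => z.
by rewrite mulrDr mulrCA.
Qed.

Definition unit_invariant (g : R -> nat) :=
  forall u z, u \is a GRing.unit -> g (u * z) = g z.

(* Every vector with a unit coordinate is uniquely a unit multiple of a
   normed one. *)
Lemma card_unit_mul_sum_lincomb_normed k l g : unit_invariant g ->
  (#|[pred u : R | u \is a GRing.unit]| * sum_lincomb_normed k l g)%N =
  sum_lincomb_unimod k l g.
Proof.
elim: k l g => [l g _|k IH l g g_inv] /=; first by rewrite muln0.
rewrite mulnDr; congr (_ + _)%N.
  rewrite -sum_nat_const; apply: eq_big => [a|a]; first by rewrite !inE.
  rewrite inE => a_unit.
  have inv_unit : a^-1 \is a GRing.unit by rewrite unitrV.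
  rewrite -(sum_lincomb_scale_unit _ _ _ inv_unit).
  apply: eq_sum_lincomb => z.
  by rewrite -(g_inv a) // mulrDr (mulVKr a_unit) mulrC.
rewrite -sum_lincomb_normed_sum IH.
  by rewrite sum_lincomb_unimod_sum.
move=> u z u_unit /=.
rewrite (reindex_inj (mulrI u_unit)) /=; apply: eq_big => [a|a _].
  by rewrite unitrMr.
by rewrite -[RHS](g_inv u) // mulrDr mulrCA.
Qed.

Lemma sum_lincomb_unimod_nonunit k l g :
  sum_lincomb k l g = (sum_lincomb_unimod k l g + sum_lincomb_nonunit k l g)%N.
Proof.
elim: k l g => [//|k IH] l g /=.
rewrite (bigID (fun a : R => a \is a GRing.unit)) /= -addnA; congr (_ + _)%N.
by rewrite -big_split /=; apply: eq_bigr => a _; rewrite IH.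
Qed.

End LinearCombinationSums.

Section ChainRing.
Variables (R : finComUnitRingType) (gamma : R) (s : nat) (T : seq R).
Hypothesis nonunit_gpow1 : forall x : R, x \isn't a GRing.unit <-> in_gpow gamma 1 x.
Hypothesis s_gt0 : (0 < s)%N.
Hypothesis gamma_nilp : gamma ^+ s = 0.
Hypothesis gamma_s1 : gamma ^+ (s - 1) != 0.
Hypothesis T_0 : T`_0 = 0.
Hypothesis T_1 : T`_1 = 1.
Hypothesis T_residues :
  forall x : R, exists! i : 'I_(size T), in_gpow gamma 1 (x - T`_i).

Local Notation q := (size T).

Lemma nonunitP (x : R) : reflect (exists y, x = y * gamma) (x \isn't a GRing.unit).
Proof.
apply: (iffP idP) => [/nonunit_gpow1 [y ->]|[y ->]]; first by exists y; rewrite expr1.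
by apply/nonunit_gpow1; exists y; rewrite expr1.
Qed.

Lemma nonunit_mulg (y : R) : gamma * y \isn't a GRing.unit.
Proof. by apply/nonunitP; exists y; rewrite mulrC. Qed.

Lemma nonunitD (x y : R) :
  x \isn't a GRing.unit -> y \isn't a GRing.unit -> x + y \isn't a GRing.unit.
Proof.
move=> /nonunitP[a ->] /nonunitP[b ->].
by apply/nonunitP; exists (a + b); rewrite mulrDl.
Qed.

Lemma unit_addg (t y : R) :
  (t + gamma * y \is a GRing.unit) = (t \is a GRing.unit).
Proof.
apply/idP/idP; apply: contraLR => nonunit_lhs.
  exact: nonunitD nonunit_lhs (nonunit_mulg y).
by rewrite -(addrK (gamma * y) t) -mulrN nonunitD // nonunit_mulg.
Qed.

Lemma gexp_eq0 j : (gamma ^+ j == 0) = (s <= j)%N.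
Proof.
apply/eqP/idP => [gj0|le_sj]; last by rewrite -(subnK le_sj) exprD gamma_nilp mulr0.
rewrite leqNgt; apply/negP => lt_js; move/eqP: gamma_s1; apply.
by rewrite -(subnK (_ : j <= s - 1)%N) ?exprD ?gj0 ?mulr0 //; lia.
Qed.

Lemma s_ge2 : gamma != 0 -> (2 <= s)%N.
Proof.
move=> g_neq0; rewrite ltn_neqAle s_gt0 andbT eq_sym.
by apply: contra g_neq0 => /eqP s1; move: gamma_nilp; rewrite s1 expr1 => ->.
Qed.

Lemma gexp_unit_eq0 j (u : R) :
  u \is a GRing.unit -> (gamma ^+ j * u == 0) = (s <= j)%N.
Proof. by move=> u_unit; rewrite -gexp_eq0 -[RHS](mulIr_eq0 _ (mulIr u_unit)). Qed.

Lemma gexp_mul_unit (x : R) : x != 0 ->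
  exists m u, [/\ (m < s)%N, u \is a GRing.unit & x = gamma ^+ m * u].
Proof.
move=> x_neq0; pose P m := [exists y, x == gamma ^+ m * y].
have P_lt m : P m -> (m < s)%N.
  case/existsP=> y /eqP ex; rewrite ltnNge -gexp_eq0.
  by apply: contra x_neq0 => /eqP gm0; rewrite ex gm0 mul0r.
have P0 : exists m, P m by exists 0%N; apply/existsP; exists x; rewrite expr0 mul1r.
have [m Pm m_max] := ex_maxnP P0 (fun m Pm => ltnW (P_lt m Pm)).
have [y /eqP ex] := existsP Pm.
exists m, y; split => //; first exact: P_lt.
apply/negPn/negP => /nonunitP [z ey].
suff: (m.+1 <= m)%N by rewrite ltnn.
apply: m_max; apply/existsP; exists z.
by rewrite ex ey exprSr -mulrA [gamma * z]mulrC mulrA.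
Qed.

Lemma mulg_eq0P (x : R) :
  reflect (exists d, x = d * gamma ^+ (s - 1)) (gamma * x == 0).
Proof.
apply: (iffP eqP) => [gx0|[d ->]]; last first.
  by rewrite mulrCA -exprS subn1 prednK // gamma_nilp mulr0.
have [->|x_neq0] := eqVneq x 0; first by exists 0; rewrite mul0r.
have [m [u [lt_ms u_unit ex]]] := gexp_mul_unit x_neq0.
have : (s <= m.+1)%N by rewrite -(gexp_unit_eq0 _ u_unit) exprS -mulrA -ex gx0.
by move=> le_s_m1; exists u; rewrite ex mulrC; congr (_ * _ ^+ _); lia.
Qed.

Definition ann j := [pred x : R | gamma ^+ j * x == 0].

Lemma in_ann j x : (x \in ann j) = (gamma ^+ j * x == 0).
Proof. by []. Qed.

Lemma sum_mulg (f : R -> nat) :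
  (\sum_(r : R) f (gamma * r)%R = #|ann 1| * \sum_(a : R | a \isn't a GRing.unit) f a)%N.
Proof.
rewrite (partition_big (fun r => gamma * r) (fun a => a \isn't a GRing.unit)) => [|r _];
  last exact: nonunit_mulg.
rewrite big_distrr /=; apply: eq_bigr => a /nonunitP [y ->].
rewrite (eq_bigr (fun _ => f (y * gamma))) => [|r /eqP ->] //.
rewrite sum_nat_const; congr (_ * _)%N.
rewrite -(card_addr _ y); apply: eq_card => r.
rewrite !inE expr1 mulrDr [y * _]mulrC.
by apply/eqP/eqP => [/(canRL (addrK _))|->]; rewrite ?subrr ?add0r.
Qed.

Lemma card_nonunit_residues :
  #|R| = (q * #|[pred a : R | a \isn't a GRing.unit]|)%N.
Proof.
have one_residue (x : R) :
    (\sum_(i < q) ((x - T`_i)%R \isn't a GRing.unit : nat) = 1)%N.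
  have [i0 [/nonunit_gpow1 i0_res i0_uniq]] := T_residues x.
  rewrite (bigD1 i0) //= i0_res big1 // => i ne_i_i0.
  by apply/eqP; rewrite eqb0; apply: contra ne_i_i0 => /nonunit_gpow1 /i0_uniq ->.
rewrite -sum1_card (eq_bigr _ (fun x _ => esym (one_residue x))) exchange_big /=.
rewrite -[X in (X * _)%N]card_ord -sum_nat_const; apply: eq_bigr => i _.
rewrite -(card_addr _ (- T`_i)) -sum1_card big_mkcond [RHS]big_mkcond.
by apply: eq_bigr => x _; rewrite !inE.
Qed.

Lemma card_ann1 : #|ann 1| = q.
Proof.
have := sum_mulg (fun _ => 1%N).
rewrite sum1_card (@sum1_card _ [pred a : R | a \isn't a GRing.unit]) -[#|xpredT|]/#|R|.
rewrite card_nonunit_residues => /eqP; rewrite eqn_mul2r => /orP [|/eqP //].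
by move/eqP/card0_eq/(_ 0); rewrite inE unitr0.
Qed.

Lemma q_ge2 : (2 <= q)%N.
Proof.
have : T`_1 != 0 by rewrite T_1 oner_neq0.
by apply: contraR; rewrite -ltnNge ltnS => /(nth_default 0) ->; rewrite eqxx.
Qed.

Lemma q_gt0 : (0 < q)%N.
Proof. exact: leq_trans q_ge2. Qed.

Lemma card_ann j : (j <= s)%N -> #|ann j| = (q ^ j)%N.
Proof.
have card_annE i : #|ann i| = (\sum_(x : R) ((gamma ^+ i * x == 0)%R : nat))%N.
  by rewrite -sum1_card big_mkcond.
elim: j => [_|j IH lt_js].
  rewrite expn0 -(card1 (0 : R)); apply: eq_card => x.
  by rewrite [in LHS]inE expr0 mul1r.
rewrite card_annE.
rewrite (eq_bigr (fun x => ((gamma ^+ j * (gamma * x) == 0)%R : nat))); last first.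
  by move=> x _; rewrite exprSr mulrA.
rewrite (sum_mulg (fun a => ((gamma ^+ j * a == 0)%R : nat))) card_ann1 expnS.
rewrite -IH ?(ltnW lt_js) //.
congr (_ * _)%N; rewrite card_annE [RHS](bigID (fun a => a \is a GRing.unit)) /=.
rewrite [X in (X + _)%N]big1 ?add0n // => u u_unit.
by rewrite gexp_unit_eq0 // leqNgt lt_js.
Qed.

Lemma card_R : #|R| = (q ^ s)%N.
Proof.
rewrite -card_ann //; apply: eq_card => x.
by rewrite [in RHS]inE gamma_nilp mul0r eqxx.
Qed.

Lemma expq_s : (q ^ s = q * q ^ (s - 1))%N.
Proof. by rewrite -expnS subn1 prednK. Qed.

Lemma card_nonunit : #|[pred a : R | a \isn't a GRing.unit]| = (q ^ (s - 1))%N.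
Proof.
by apply/eqP; rewrite -(eqn_pmul2l q_gt0) -card_nonunit_residues card_R expq_s.
Qed.

Lemma card_unit : #|[pred a : R | a \is a GRing.unit]| = ((q - 1) * q ^ (s - 1))%N.
Proof.
have := cardC [pred a : R | a \is a GRing.unit].
rewrite card_R expq_s mulnBl mul1n => <-.
by rewrite -card_nonunit addnK.
Qed.

Local Notation w := (wHom gamma s T).

Lemma wHomE (x : R) :
  w x = if x == 0 then 0%N
        else if gamma * x == 0 then (q ^ (s - 1))%N else ((q - 1) * q ^ (s - 2))%N.
Proof.
rewrite /wHom (_ : [exists y, x == y * gamma ^+ (s - 1)] = (gamma * x == 0)) //.
by apply/existsP/mulg_eq0P => [[y /eqP ->]|[y ->]]; exists y.
Qed.

Lemma wHom0 : w 0 = 0%N.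
Proof. by rewrite wHomE eqxx. Qed.

Lemma wHom_unit_invariant : unit_invariant w.
Proof.
move=> u x u_unit; rewrite !wHomE (mulrI_eq0 _ (mulrI u_unit)).
by rewrite mulrCA (mulrI_eq0 _ (mulrI u_unit)).
Qed.

(* Clearing the denominator [q] of [(q - 1) * q ^ (s - 2)] makes the
   homogeneous weight a combination of two indicator functions. *)
Lemma wHom_indicators (x : R) :
  (q * w x + q ^ (s - 1) * (gamma * x != 0)%R = q ^ s * (x != 0)%R)%N.
Proof.
rewrite wHomE; have [->|x_neq0] := eqVneq x 0; first by rewrite mulr0 eqxx !muln0.
have [_|gx_neq0] := eqVneq (gamma * x) 0; first by rewrite !muln0 !muln1 addn0 expq_s.
have le2s : (2 <= s)%N by apply: s_ge2; apply: contraNneq gx_neq0 => ->; rewrite mul0r.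
rewrite !muln1 expq_s (_ : (s - 1 = (s - 2).+1)%N); last by lia.
by rewrite expnS; have := q_gt0; nia.
Qed.

Lemma sum_line_mulg_eq0 (b l : R) : l != 0 ->
  (\sum_(r : R) (gamma * (b + l * r) == 0)%R =
   q * \sum_(r : R) (b + l * r == 0)%R)%N.
Proof.
move=> /gexp_mul_unit [m [u [lt_ms u_unit el]]].
have indicator (P : pred R) x : (\sum_(c | P c) (x == c : nat))%N = P x.
  case Px: (P x); last first.
    by rewrite big1 // => c Pc; case: eqP => // xc; rewrite -xc Px in Pc.
  by rewrite (bigD1 x) // eqxx big1 // => c /andP [_ /negbTE]; rewrite eq_sym => ->.
rewrite (eq_bigr (fun r => \sum_(c in ann 1) (b + l * r == c)%R))%N; last first.
  by move=> r _; rewrite indicator in_ann expr1.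
rewrite exchange_big /= -card_ann1 -sum_nat_const; apply: eq_bigr => c.
rewrite in_ann expr1 => /mulg_eq0P [d ->].
(* [d * gamma ^+ (s - 1)] is a multiple [l * t] of [l], so its fibre is a
   translate of the fibre of [0]. *)
pose t := u^-1 * gamma ^+ (s - 1 - m) * d.
have -> : d * gamma ^+ (s - 1) = l * t.
  by rewrite el /t !mulrA mulrK // -exprD subnKC 1?mulrC //; lia.
rewrite (reindex_inj (addIr t)) /=; apply: eq_bigr => r _.
by rewrite mulrDr addrA -{2}[l * t]add0r (inj_eq (addIr _)).
Qed.

Lemma sum_wHom_line (b l : R) : l != 0 ->
  (\sum_(r : R) w (b + l * r)%R = (q - 1) * q ^ (s - 1) * q ^ (s - 1))%N.
Proof.
move=> l_neq0.
have split_sum (P : pred R) : (\sum_(r : R) P r + \sum_(r : R) ~~ P r = q ^ s)%N.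
  by rewrite -big_split -card_R -sum1_card; apply: eq_bigr => r _; case: (P r).
have indicators :
  (q * \sum_(r : R) w (b + l * r)%R +
   q ^ (s - 1) * \sum_(r : R) (gamma * (b + l * r) != 0)%R =
   q ^ s * \sum_(r : R) (b + l * r != 0)%R)%N.
  by rewrite !big_distrr -big_split /=; apply: eq_bigr => r _; apply: wHom_indicators.
have zeros := sum_line_mulg_eq0 b l_neq0.
have := split_sum [pred r | b + l * r == 0].
have := split_sum [pred r | gamma * (b + l * r) == 0].
move: indicators zeros; rewrite expq_s /=.
(* With [Z] zeros of [b + l * r], the indicator identity summed over [r]
   reads [q * S + Q * (q * Q - q * Z) = q * Q * (q * Q - Z)]. *)
set Q := (q ^ (s - 1))%N.
by have := q_gt0; nia.
Qed.

Lemma sum_const_R (c : nat) : (\sum_(r : R) c = q ^ s * c)%N.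
Proof. by rewrite sum_nat_const -card_R. Qed.

Lemma sum_lincomb_wHom k l b :
  sum_lincomb k l (fun z => w (b + z)) =
  (if [exists i : 'I_k, l i != 0%R] then (q - 1) * q ^ (s - 1) * q ^ (s * k - 1)
   else q ^ (s * k) * w b)%N.
Proof.
elim: k l b => [l b|k IH l b] /=.
  by rewrite addr0 muln0 expn0 mul1n; case: existsP => // [[[]]].
under eq_bigr => r _ do rewrite (eq_sum_lincomb _ _ (fun z => congr1 w (addrA b _ z))) IH.
rewrite exists_ordS /=.
case: [exists i : 'I_k, l i.+1 != 0] / existsP => [[[i lt_ik] _]|_].
  rewrite orbT sum_const_R mulnCA -expnD; congr (_ * _ ^ _)%N; nia.
rewrite orbF -big_distrr /=.
case: ifPn => [l0_neq0|/negPn/eqP l0_0].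
  rewrite sum_wHom_line // (_ : s * k.+1 - 1 = s * k + (s - 1))%N ?expnD; last by nia.
  by rewrite mulnCA mulnA.
rewrite (eq_bigr (fun=> w b)) => [|r _]; last by rewrite l0_0 mul0r addr0.
by rewrite sum_const_R mulnA -expnD mulnS addnC.
Qed.

Lemma sum_lincomb_wHom0 k l :
  sum_lincomb k l w =
  (if [exists i : 'I_k, l i != 0%R] then (q - 1) * q ^ (s - 1) * q ^ (s * k - 1)
   else 0)%N.
Proof.
rewrite (eq_sum_lincomb _ _ (fun z => congr1 w (esym (add0r z)))) sum_lincomb_wHom.
by rewrite wHom0 muln0.
Qed.

(* The vectors with no unit coordinate are exactly [gamma *: R^k], each hit
   [q ^ k] times. *)
Lemma sum_lincomb_nonunit_mulg k l (g : R -> nat) :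
  (q ^ k * sum_lincomb_nonunit k l g = sum_lincomb k l (fun z => g (gamma * z)%R))%N.
Proof.
elim: k l g => [l g|k IH l g] /=; first by rewrite expn0 mul1n mulr0.
rewrite expnS -mulnA big_distrr /= -{1}card_ann1.
rewrite -(sum_mulg (fun a => q ^ k *
   sum_lincomb_nonunit k (l \o S) (fun z => g (l 0%N * a + z)%R)))%N.
apply: eq_bigr => r _; rewrite IH; apply: eq_sum_lincomb => z.
by rewrite mulrDr mulrCA.
Qed.

Lemma sum_lincomb_normed_wHom k (l : nat -> R) : [exists i : 'I_k, l i != 0%R] ->
  sum_lincomb_normed k l w =
  (if [exists i : 'I_k, (gamma * l i != 0)%R] then q ^ (s * k - k - 1) * (q ^ k - 1)
   else q ^ (s * k - 1))%N.
Proof.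
move=> l_neq0.
have unimod := card_unit_mul_sum_lincomb_normed k l wHom_unit_invariant.
have total := sum_lincomb_unimod_nonunit k l w.
have nonunit := sum_lincomb_nonunit_mulg k l w.
rewrite sum_lincomb_scale sum_lincomb_wHom0 in nonunit.
rewrite sum_lincomb_wHom0 l_neq0 -unimod card_unit in total.
have qk_gt0 : (0 < q ^ k)%N by rewrite expn_gt0 q_gt0.
have U_gt0 : (0 < (q - 1) * q ^ (s - 1))%N.
  by rewrite muln_gt0 subn_gt0 q_ge2 expn_gt0 q_gt0.
move: total nonunit U_gt0; set B := sum_lincomb_normed k l w.
set N := sum_lincomb_nonunit k l w; set U := ((q - 1) * q ^ (s - 1))%N.
case: ifPn => [/existsP [i gli_neq0]|_] total nonunit U_gt0; last first.
  have N0 : N = 0%N by apply/eqP; rewrite -(eqn_pmul2l qk_gt0) nonunit muln0.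
  by apply/eqP; rewrite -(eqn_pmul2l U_gt0) total N0 addn0.
have k_gt0 : (0 < k)%N := leq_ltn_trans (leq0n i) (ltn_ord i).
have le2s : (2 <= s)%N by apply: s_ge2; apply: contraNneq gli_neq0 => ->; rewrite mul0r.
have e : (s * k - 1 = k + (s * k - k - 1))%N by nia.
rewrite e expnD in total nonunit; set X := (q ^ (s * k - k - 1))%N in total nonunit *.
have N_eq : N = (U * X)%N by apply/eqP; rewrite -(eqn_pmul2l qk_gt0) nonunit mulnCA.
by apply/eqP; rewrite -(eqn_pmul2l U_gt0); apply/eqP; rewrite N_eq in total; nia.
Qed.

Definition rho_digits (n j : nat) : R :=
  \sum_(i < n) T`_((j %/ q ^ i) %% q)%N * gamma ^+ i.

Lemma rho_digitsS n j :
  rho_digits n.+1 j = T`_(j %% q) + gamma * rho_digits n (j %/ q)%N.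
Proof.
rewrite /rho_digits big_ord_recl /= expn0 divn1 expr0 mulr1; congr (_ + _).
rewrite mulr_sumr; apply: eq_bigr => i _.
by rewrite /bump /= add1n expnS divnMA exprS mulrCA.
Qed.

Lemma rho_digits_onto n (x : R) :
  exists2 j, (j < q ^ n)%N & exists y, x - rho_digits n j = gamma ^+ n * y.
Proof.
elim: n x => [|n IH] x.
  exists 0%N; first by rewrite expn0.
  by exists x; rewrite /rho_digits big_ord0 subr0 expr0 mul1r.
have [i [[y0 ey0] _]] := T_residues x.
have [j lt_j [y ey]] := IH y0.
have lt_iq := ltn_ord i.
exists (i + q * j)%N; first by rewrite expnS; nia.
exists y; rewrite rho_digitsS addnC mulnC modnMDl modn_small // divnMDl ?q_gt0 //.
by rewrite divn_small // addn0 opprD addrA ey0 expr1 exprS -mulrA -ey mulrBr mulrC.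
Qed.

Lemma sum_rho (f : R -> nat) :
  (\sum_(j < q ^ s) f (rho gamma s T j) = \sum_(r : R) f r)%N.
Proof.
pose rho_ord (j : 'I_(q ^ s)) := rho gamma s T j.
have rho_onto r : r \in codom rho_ord.
  have [j lt_j [y]] := rho_digits_onto s r.
  rewrite gamma_nilp mul0r => /eqP; rewrite subr_eq0 => /eqP ->.
  exact: (codom_f rho_ord (Ordinal lt_j)).
have rho_inj : injective rho_ord.
  suff /image_injP rho_inj : #|[seq rho_ord j | j in 'I_(q ^ s)]| == #|'I_(q ^ s)|.
    by move=> j1 j2; apply: rho_inj.
  rewrite card_ord; apply/eqP; transitivity #|R|; last exact: card_R.
  by apply: eq_card => r; have := rho_onto r; rewrite /codom => ->.
rewrite [RHS](reindex rho_ord) //; apply: onW_bij; apply: inj_card_bij rho_inj _.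
by rewrite card_ord card_R.
Qed.

Lemma T_nonunit b : (b < q)%N -> (T`_b \isn't a GRing.unit) = (b == 0%N).
Proof.
move=> lt_bq; apply/idP/eqP => [b_nonunit|->]; last by rewrite T_0 unitr0.
have [i [_ i_uniq]] := T_residues 0.
have i_b : i = Ordinal lt_bq by apply: i_uniq; apply/nonunit_gpow1; rewrite sub0r unitrN.
have i_0 : i = Ordinal q_gt0 by apply: i_uniq; exists 0; rewrite /= T_0 subr0 mul0r.
by move: i_0; rewrite i_b => -[].
Qed.

Lemma rho_nonunit j : (rho gamma s T j \isn't a GRing.unit) = (j %% q == 0)%N.
Proof.
rewrite -[rho _ _ _ _]/(rho_digits s j) -(prednK s_gt0) rho_digitsS.
by rewrite unit_addg T_nonunit // ltn_mod q_gt0.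
Qed.

Lemma sum_agamma (f : R -> nat) :
  (\sum_(a < q ^ (s - 1)) f (agamma gamma s T a) =
   \sum_(x : R | x \isn't a GRing.unit) f x)%N.
Proof.
pose f_nonunit x := if x \isn't a GRing.unit then f x else 0%N.
transitivity (\sum_(j < q ^ s) f_nonunit (rho gamma s T j))%N; last first.
  by rewrite sum_rho [RHS]big_mkcond.
rewrite expq_s [(q * _)%N]mulnC (sum_ord_mul _ _ (fun j => f_nonunit (rho gamma s T j))).
apply: eq_bigr => a _.
rewrite (bigD1 (Ordinal q_gt0)) //= big1 => [|b b_neq0]; last first.
  rewrite /f_nonunit rho_nonunit modnMDl modn_small ?ltn_ord //.
  by case: eqP => // b0; move: b_neq0; rewrite -val_eqE /= b0 eqxx.
by rewrite addn0 /f_nonunit rho_nonunit addn0 modnMl /agamma /qT mulnC.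
Qed.

Local Notation Ga := (Galpha gamma s T).
Local Notation Gb := (Gbeta gamma s T).
Local Notation nb := (nbeta s T).

Lemma GalphaS k r j : (0 < k)%N ->
  Ga k.+1 r j = if r is r'.+1 then Ga k r' (j %% q ^ (s * k))%N
                else rho gamma s T (j %/ q ^ (s * k))%N.
Proof. by case: k => // k _; case: r. Qed.

Lemma GbetaS k r j : (0 < k)%N ->
  Gb k.+1 r j =
  if (j < q ^ (s * k))%N then (if r is r'.+1 then Ga k r' j else 1)
  else if r is r'.+1 then Gb k r' ((j - q ^ (s * k)) %% nb k)%N
       else agamma gamma s T ((j - q ^ (s * k)) %/ nb k)%N.
Proof. by case: k => // k _; case: r. Qed.

Lemma nbetaS k : (0 < k)%N -> nb k.+1 = (q ^ (s * k) + q ^ (s - 1) * nb k)%N.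
Proof. by case: k. Qed.

Lemma nbeta_gt0 k : (0 < k)%N -> (0 < nb k)%N.
Proof. by case: k => // [[|k]] _ //=; rewrite addn_gt0 expn_gt0 q_gt0. Qed.

Lemma sum_Galpha_columns k (l : nat -> R) (g : R -> nat) : (0 < k)%N ->
  (\sum_(j < q ^ (s * k)) g (\sum_(r < k) l r * Ga k r j)%R = sum_lincomb k l g)%N.
Proof.
elim: k l g => // [[|k]] IH l g _.
  rewrite muln1 [RHS]/= -(sum_rho (fun x => g (l 0%N * x + 0)%R)); apply: eq_bigr => j _.
  by rewrite big_ord1 addr0.
rewrite mulnS expnD (sum_ord_mul _ _ (fun j => g (\sum_(r < k.+2) l r * Ga k.+2 r j)%R)).
rewrite /= -(sum_rho (fun x => sum_lincomb k.+1 (l \o S) (fun z => g (l 0%N * x + z)%R))).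
apply: eq_bigr => a _; rewrite -IH //; apply: eq_bigr => b _; congr g.
have qsk_gt0 : (0 < q ^ (s * k.+1))%N by rewrite expn_gt0 q_gt0.
rewrite (big_ord_recl_nat _ (fun r => l r * Ga k.+2 r (a * q ^ (s * k.+1) + b)%N)).
rewrite GalphaS // divnMDl // divn_small ?ltn_ord // addn0.
by congr (_ + _); apply: eq_bigr => r _; rewrite GalphaS // modnMDl modn_small.
Qed.

Lemma sum_Gbeta_columns k (l : nat -> R) (g : R -> nat) : (0 < k)%N ->
  (\sum_(j < nb k) g (\sum_(r < k) l r * Gb k r j)%R = sum_lincomb_normed k l g)%N.
Proof.
elim: k l g => // [[|k]] IH l g _.
  by rewrite [nb 1]/= !big_ord1 /= big1 // addn0 addr0 mulr1.
have k_gt0 : (0 < k.+1)%N by [].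
rewrite nbetaS // big_split_ord; congr (_ + _)%N.
  rewrite -(sum_Galpha_columns (l \o S) (fun z => g (l 0%N + z)%R) k_gt0).
  apply: eq_bigr => j _; congr g.
  rewrite (big_ord_recl_nat _ (fun r => l r * Gb k.+2 r (lshift _ j))).
  rewrite (GbetaS 0 (lshift _ j) k_gt0) (ltn_ord j) mulr1; congr (_ + _).
  by apply: eq_bigr => r _; rewrite (GbetaS r.+1 (lshift _ j) k_gt0) (ltn_ord j).
rewrite (sum_ord_mul _ _ (fun i =>
  g (\sum_(r < k.+2) l r * Gb k.+2 r (q ^ (s * k.+1) + i)%N)%R)).
rewrite -(sum_agamma (fun x =>
  sum_lincomb_normed k.+1 (l \o S) (fun z => g (l 0%N * x + z)%R))).
apply: eq_bigr => a _; rewrite -IH //; apply: eq_bigr => b _; congr g.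
rewrite (big_ord_recl_nat _ (fun r =>
  l r * Gb k.+2 r (q ^ (s * k.+1) + (a * nb k.+1 + b))%N)).
have past_alpha : (q ^ (s * k.+1) + (a * nb k.+1 + b) < q ^ (s * k.+1))%N = false.
  by rewrite ltnNge leq_addr.
have nb_gt0 := nbeta_gt0 k_gt0.
rewrite (GbetaS 0 _ k_gt0) past_alpha addKn divnMDl // divn_small ?ltn_ord // addn0.
congr (_ + _); apply: eq_bigr => r _.
by rewrite (GbetaS r.+1 _ k_gt0) past_alpha addKn modnMDl modn_small.
Qed.

Lemma wHom_vec0 n : wHom_vec gamma s T (0 : 'rV[R]_n) = 0%N.
Proof. by rewrite /wHom_vec big1 // => j _; rewrite mxE wHom0. Qed.

Lemma wHom_vec_codeword k (lam : 'rV[R]_k) : (0 < k)%N ->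
  wHom_vec gamma s T (lam *m Gbeta_mx gamma s T k) =
  if lam == 0 then 0%N
  else if gamma *: lam == 0 then (q ^ (s * k - 1))%N
  else (q ^ (s * k - k - 1) * (q ^ k - 1))%N.
Proof.
case: k lam => // k lam _.
have [->|lam_neq0] := eqVneq lam 0; first by rewrite mul0mx wHom_vec0.
pose l r := lam 0 (inord r).
have l_lam (r : 'I_k.+1) : l r = lam 0 r by rewrite /l inord_val.
have -> : wHom_vec gamma s T (lam *m Gbeta_mx gamma s T k.+1) =
          sum_lincomb_normed k.+1 l w.
  rewrite /wHom_vec -sum_Gbeta_columns //; apply: eq_bigr => j _; congr w.
  by rewrite !mxE; apply: eq_bigr => r _; rewrite mxE l_lam.
rewrite sum_lincomb_normed_wHom; last first.
  by have [i li_neq0] := rV0Pn _ lam_neq0; apply/existsP; exists i; rewrite l_lam.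
suff -> : [exists i : 'I_k.+1, gamma * l i != 0] = (gamma *: lam != 0) by case: eqP.
by apply/existsP/rV0Pn => -[i neq0]; exists i; move: neq0; rewrite mxE l_lam.
Qed.

Lemma codeword_eq0 k (lam : 'rV[R]_k) : (0 < k)%N ->
  (lam *m Gbeta_mx gamma s T k == 0) = (lam == 0).
Proof.
move=> k_gt0; apply/eqP/eqP => [cw0|->]; last exact: mul0mx.
apply/eqP; have [//|lam_neq0] := eqVneq lam 0.
have := wHom_vec_codeword lam k_gt0; rewrite cw0 wHom_vec0 (negbTE lam_neq0).
have : (0 < q ^ (s * k - 1))%N && (0 < q ^ (s * k - k - 1) * (q ^ k - 1))%N.
  rewrite muln_gt0 !expn_gt0 q_gt0 subn_gt0.
  by rewrite -[X in (X < _)%N](expn0 q) ltn_exp2l ?q_ge2.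
by case/andP; case: ifP => _ pos1 pos2 e0; rewrite -e0 in pos1 pos2.
Qed.

Lemma is_nu_gexp_unit (u : R) m : (m < s)%N -> u \is a GRing.unit ->
  is_nu gamma (gamma ^+ m * u) m.
Proof.
move=> lt_ms u_unit; split; first by exists u.
move=> m' b b_unit e; rewrite leqNgt; apply/negP => lt_mm'.
have diff_unit : u - gamma ^+ (m' - m) * b \is a GRing.unit.
  by rewrite -(subnSK lt_mm') exprS -mulrA -mulrN unit_addg.
have : gamma ^+ m * (u - gamma ^+ (m' - m) * b) == 0.
  by rewrite mulrBr e mulrA -exprD subnKC ?subrr // ltnW.
by rewrite gexp_unit_eq0 // leqNgt lt_ms.
Qed.

Lemma is_nu_neq0 (x : R) m : is_nu gamma x m -> x != 0 /\ (m < s)%N.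
Proof.
move=> [[b b_unit ex] m_max].
have lt_ms : (m < s)%N.
  rewrite ltnNge; apply/negP => le_sm.
  have : (m.+1 <= m)%N.
    apply: (m_max _ 1 (unitr1 _)).
    have gexp0 j : (s <= j)%N -> gamma ^+ j = 0 by move=> ?; apply/eqP; rewrite gexp_eq0.
    by rewrite ex mulr1 !gexp0 ?mul0r // leqW.
  by rewrite ltnn.
by split=> //; rewrite ex gexp_unit_eq0 // -ltnNge.
Qed.

Lemma is_nu_exists (x : R) : x != 0 -> exists m, is_nu gamma x m.
Proof.
move=> /gexp_mul_unit [m [u [lt_ms u_unit ->]]].
by exists m; apply: is_nu_gexp_unit.
Qed.

Lemma is_nu_mulg_eq0 (x : R) m :
  is_nu gamma x m -> (gamma * x == 0) = (m == s - 1)%N.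
Proof.
move=> nu_x; have [_ lt_ms] := is_nu_neq0 nu_x.
case: nu_x => [[b b_unit ->] _].
by rewrite mulrA -exprS gexp_unit_eq0 //; apply/idP/eqP; lia.
Qed.

Section RowValuation.
Variables (n : nat) (c : 'rV[R]_n).

Lemma vnu_exists : c != 0 -> exists m, vnu gamma c m.
Proof.
move=> /rV0Pn [i0 ci0_neq0].
pose P m := [exists i, [exists b, (b \is a GRing.unit) && (c 0 i == gamma ^+ m * b)]].
have P_nu j m : is_nu gamma (c 0 j) m -> P m.
  case=> [[b b_unit eb] _].
  by apply/existsP; exists j; apply/existsP; exists b; rewrite b_unit eb eqxx.
have [m0 nu_m0] := is_nu_exists ci0_neq0.
have [m /existsP [i /existsP [b /andP [b_unit /eqP eb]]] m_min] :=
  ex_minnP (ex_intro _ m0 (P_nu _ _ nu_m0)).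
have lt_ms : (m < s)%N.
  exact: leq_ltn_trans (m_min _ (P_nu _ _ nu_m0)) (proj2 (is_nu_neq0 nu_m0)).
exists m; split; first by exists i; rewrite eb; apply: is_nu_gexp_unit.
by move=> j m' /P_nu; apply: m_min.
Qed.

Lemma vnu_neq0 m : vnu gamma c m -> c != 0.
Proof. by case=> [[i /is_nu_neq0 [ci_neq0 _]] _]; apply/rV0Pn; exists i. Qed.

Lemma vnu_lastP : vnu gamma c (s - 1) <-> c != 0 /\ gamma *: c == 0.
Proof.
rewrite scale_row_eq0; split=> [nu_c|[c_neq0 /forallP gc0]].
  split; first exact: vnu_neq0 nu_c.
  apply/forallP => j; have [->|/is_nu_exists [m nu_m]] := eqVneq (c 0 j) 0.
    by rewrite mulr0.
  have [_ lt_ms] := is_nu_neq0 nu_m.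
  have le_s1m := proj2 nu_c j m nu_m.
  by rewrite (is_nu_mulg_eq0 nu_m); apply/eqP; lia.
have [m nu_c] := vnu_exists c_neq0.
have [[i nu_ci] _] := nu_c.
by have := gc0 i; rewrite (is_nu_mulg_eq0 nu_ci) => /eqP <-.
Qed.

Lemma vnu_ltP : (exists2 m, (m < s - 1)%N & vnu gamma c m) <-> gamma *: c != 0.
Proof.
split=> [[m lt_m [[i nu_ci] _]]|gc_neq0].
  rewrite scale_row_eq0 negb_forall; apply/existsP; exists i.
  by rewrite (is_nu_mulg_eq0 nu_ci) neq_ltn lt_m.
have c_neq0 : c != 0 by apply: contraNneq gc_neq0 => ->; rewrite scaler0.
have [m nu_c] := vnu_exists c_neq0; exists m => //.
have [[i nu_ci] _] := nu_c; have [_ lt_ms] := is_nu_neq0 nu_ci.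
rewrite ltn_neqAle -ltnS subn1 prednK // lt_ms andbT -subn1.
apply: contraNneq gc_neq0 => m_s1; rewrite m_s1 in nu_c.
by have [_ ->] := vnu_lastP.1 nu_c.
Qed.

End RowValuation.

Lemma codeword_wHom_by_valuation k (lam : 'rV[R]_k) : (0 < k)%N ->
  let c := lam *m Gbeta_mx gamma s T k in
  (vnu gamma c (s - 1) -> wHom_vec gamma s T c = (q ^ (s * k - 1))%N) /\
  ((exists2 m, (m < s - 1)%N & vnu gamma c m) ->
     wHom_vec gamma s T c = (q ^ (s * k - k - 1) * (q ^ k - 1))%N) /\
  (~ vnu gamma c (s - 1) -> ~ (exists2 m, (m < s - 1)%N & vnu gamma c m) ->
     wHom_vec gamma s T c = 0%N).
Proof.
move=> k_gt0 c.
have gamma_c : gamma *: c = (gamma *: lam) *m Gbeta_mx gamma s T k by rewrite scalemxAl.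
rewrite vnu_lastP vnu_ltP gamma_c !codeword_eq0 // wHom_vec_codeword //.
split; [|split].
- by case=> /negbTE -> ->.
- move=> gl_neq0; have lam_neq0 : lam != 0.
    by apply: contraNneq gl_neq0 => ->; rewrite scaler0.
  by rewrite (negbTE lam_neq0) (negbTE gl_neq0).
move=> not_last /negP; rewrite negbK => gl0.
by have [//|lam_neq0] := eqVneq lam 0; case: not_last.
Qed.

End ChainRing.

Unset Implicit Arguments.

Theorem proposition3p24 (R : finComUnitRingType) (gamma : R) (s : nat) (T : seq R)
  (* R is a finite commutative chain ring with maximal ideal <gamma>:
     the non-units are exactly the multiples of gamma *)
  (hmax : forall x : R, x \isn't a GRing.unit <-> in_gpow gamma 1 x)
  (* nilpotency index s *)
  (hs0 : (0 < s)%N) (hs : gamma ^+ s = 0) (hs1 : gamma ^+ (s - 1) != 0)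
  (* T = (e_0, ..., e_{q-1}) : coset representatives of R/<gamma>, e_0 = 0, e_1 = 1 *)
  (hT0 : T`_0 = 0) (hT1 : T`_1 = 1)
  (hT : forall x : R, exists! i : 'I_(size T), in_gpow gamma 1 (x - T`_i))
  (k : nat) (hk : (1 <= k)%N)
  (c : 'rV[R]_(nbeta s T k))
  (hc : exists lam : 'rV[R]_k, c = lam *m Gbeta_mx gamma s T k) :
  let q := size T in
  (vnu gamma c (s - 1) -> wHom_vec gamma s T c = (q ^ (s * k - 1))%N) /\
  ((exists2 m, (m < s - 1)%N & vnu gamma c m) ->
     wHom_vec gamma s T c = (q ^ (s * k - k - 1) * (q ^ k - 1))%N) /\
  (~ vnu gamma c (s - 1) -> ~ (exists2 m, (m < s - 1)%N & vnu gamma c m) ->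
     wHom_vec gamma s T c = 0%N).
Proof.
move=> q; case: hc => lam ->.
exact: (codeword_wHom_by_valuation hmax hs0 hs hs1 hT0 hT1 hT lam hk).
Qed.
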